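(* Let $X,Y$ be real Banach spaces with a bilinear map $\langle\cdot,\cdot\rangle\colon X\times Y\to\mathbb{R}$ satisfying (B1)–(B5) below. Let $\mathcal{I}\subset\mathbb{N}$ be infinite, $n\in\mathbb{N}$, $L\in2\mathbb{N}$ and $\eta>0$. Then for all bounded sequences $(x_j)$ in $X$ and $(y_j)$ in $Y$ there exists an infinite set $\Lambda\subset\mathcal{I}$ such that $$\sup\Bigl\{\Bigl|\Bigl\langle\sum_{k\in\mathcal{B}}\varepsilon_kx_k,y_j\Bigr\rangle\Bigr|:\mathcal{B}\subset\Lambda,\ |\mathcal{B}|=L,\ \varepsilon\in\mathcal{E}(\mathcal{B}),\ 1\le j\le n\Bigr\}\le\eta,$$ $$\sup\Bigl\{\Bigl|\Bigl\langle x_j,\sum_{k\in\mathcal{B}}\varepsilon_ky_k\Bigr\rangle\Bigr|:\mathcal{B}\subset\Lambda,\ |\mathcal{B}|=L,\ \varepsilon\in\mathcal{E}(\mathcal{B}),\ 1\le j\le n\Bigr\}\le\eta,$$ where $\mathcal{E}(\mathcal{B})=\{(\varepsilon_k)\in\{\pm1\}^{\mathcal{B}}:\sum_{k\in\mathcal{B}}\varepsilon_k=0\}$.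
   Context: Standing assumptions: (B1) if $\langle x,y\rangle=0$ for all $y\in Y$ then $x=0$; (B2) if $\langle x,y\rangle=0$ for all $x\in X$ then $y=0$; (B3) there is $C_d>0$ with $|\langle x,y\rangle|\le C_d\|x\|\|y\|$; and there are normalized sequences $(e_j)\subset X$, $(f_j)\subset Y$ with (B4) $\langle e_j,f_k\rangle=1$ if $j=k$ and $0$ otherwise, and (B5) every $x\in X$ has the unique representation $x=\sum_j\langle x,f_j\rangle e_j$ converging in $\sigma(X,Y)$, the locally convex topology on $X$ generated by the seminorms $x\mapsto|\langle x,y\rangle|$, $y\in Y$. *)

From HB Require Import structures.
From mathcomp Require Import all_boot all_order all_algebra.
From mathcomp Require Import all_classical all_reals all_analysis.
From mathcomp Require Import finmap.
Set Implicit Arguments. Unset Strict Implicit. Unset Printing Implicit Defensive.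
Import Order.TTheory GRing.Theory Num.Theory.
Import numFieldNormedType.Exports.
Local Open Scope classical_set_scope.
Local Open Scope ring_scope.

Definition bilinear_pairing (R : realType) (X Y : normedModType R)
  (pair : X -> Y -> R) : Prop :=
  (forall (a : R) (x1 x2 : X) (y : Y),
      pair (a *: x1 + x2) y = a * pair x1 y + pair x2 y) /\
  (forall (a : R) (x : X) (y1 y2 : Y),
      pair x (a *: y1 + y2) = a * pair x y1 + pair x y2).

(* (B1)-(B5) of the paper, for given normalized sequences e, f. *)
Definition standing_assumptions (R : realType) (X Y : normedModType R)
  (pair : X -> Y -> R) (Cd : R) (e : nat -> X) (f : nat -> Y) : Prop :=
  [/\ (forall x : X, (forall y : Y, pair x y = 0) -> x = 0),
      (forall y : Y, (forall x : X, pair x y = 0) -> y = 0),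
      0 < Cd /\ (forall x y, `|pair x y| <= Cd * `|x| * `|y|),
      [/\ (forall j, `|e j| = 1), (forall j, `|f j| = 1) &
          (forall j k, pair (e j) (f k) = if j == k then 1 else 0)] &
      (* B5: for every x, the coefficient sequence a with
         x = sum_j a_j e_j in sigma(X,Y) (i.e. for every y the partial sums
         of sum_j a_j <e_j,y> converge to <x,y>) exists and is unique,
         namely a_j = <x,f_j>. *)
      (forall (x : X) (a : nat -> R),
         (forall y : Y,
            (fun N : nat => \sum_(j < N) a j * pair (e j) y) @ \oo
              --> pair x y)
         <-> a = (fun j => pair x (f j)))].

Definition balanced_signs (R : realType) (B : {fset nat}) (eps : nat -> R) : Prop :=
  (forall k, k \in B -> eps k = 1 \/ eps k = -1) /\
  \sum_(k <- B) eps k = 0.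

From HB Require Import structures.
From mathcomp Require Import all_boot all_order all_algebra.
From mathcomp Require Import all_classical all_reals all_analysis.
From mathcomp Require Import finmap.
Import Order.TTheory GRing.Theory Num.Theory.
Import numFieldNormedType.Exports.
Local Open Scope classical_set_scope.
Local Open Scope ring_scope.

(* Only bilinearity and boundedness of the pairing matter.  The finitely many
   bounded scalar sequences k |-> <x_k, y_j> and k |-> <x_j, y_k>, j <= n,
   are, by the infinite pigeonhole principle, within d of a constant c_j on a
   common infinite set Lam included in I.  In a zero-sum combination of L signs
   the constants cancel, so each pairing is at most L d <= eta. *)

Lemma infinite_set_fiber {U T : Type} {S : set U} {f : U -> T} :
  infinite_set S -> finite_set (f @` S) ->
  exists t, infinite_set (S `&` f @^-1` [set t]).
Proof.
move=> Sinf fSfin; apply/not_existsP => fibers_fin; apply: Sinf.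
apply: (sub_finite_set _ (bigcup_finite fSfin (fun t _ => contrapT (fibers_fin t)))).
by move=> u Su; exists (f u); [exists u | split].
Qed.

Definition near_constant {R : numDomainType} (d : R) (S : set nat) (a : nat -> R) : Prop :=
  exists c, forall k, S k -> `|a k - c| <= d.

Lemma bounded_near_constant_subset {R : archiRealFieldType} {S : set nat}
    {a : nat -> R} {M d : R} :
  infinite_set S -> (forall k, `|a k| <= M) -> 0 < d ->
  exists S', [/\ S' `<=` S, infinite_set S' & near_constant d S' a].
Proof.
move=> Sinf aM d_gt0.
have bin_ge0 k : 0 <= (a k + M) / d.
  apply: divr_ge0; last exact: ltW.
  by rewrite -lerBlDr sub0r lerNl (le_trans (ler_norm _)) ?normrN.
(* [bin k] indexes the width-[d] subinterval of [0, 2M] containing [a k + M]. *)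
pose bin k := Num.truncn ((a k + M) / d).
have bins_fin : finite_set (bin @` S).
  apply: (sub_finite_set _ (finite_II (Num.truncn ((M + M) / d)).+1)).
  move=> _ [k _ <-]; rewrite /= ltnS truncn_le_nat.
  apply: le_lt_trans (truncnS_gt _); rewrite ler_pM2r ?invr_gt0 // lerD2r.
  exact: le_trans (ler_norm _) (aM k).
have [t tinf] := infinite_set_fiber Sinf bins_fin.
exists (S `&` bin @^-1` [set t]); split; [by move=> k [] | exact: tinf |].
exists (t%:R * d - M) => k [_ /= <-].
have /andP[lo hi] := truncn_itv (bin_ge0 k).
rewrite opprB addrA ger0_norm.
  by rewrite lerBlDl -{2}[d]mul1r -mulrDl natr1 -ler_pdivrMr // ltW.
by rewrite subr_ge0 -ler_pdivlMr.
Qed.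

Lemma bounded_family_near_constant_subset {R : archiRealFieldType}
    {S : set nat} {F : nat -> nat -> R} {M d : R} (m : nat) :
  infinite_set S -> (forall i k, `|F i k| <= M) -> 0 < d ->
  exists S', [/\ S' `<=` S, infinite_set S' &
    forall i, (i < m)%N -> near_constant d S' (F i)].
Proof.
move=> Sinf FM d_gt0; elim: m => [|m [S' [S'S S'inf S'F]]].
  by exists S; split.
have [S'' [S''S' S''inf S''Fm]] :=
  bounded_near_constant_subset S'inf (FM m) d_gt0.
exists S''; split => [k /S''S' /S'S //|//|i].
rewrite ltnS leq_eqVlt => /orP[/eqP -> //|/S'F [c Hc]].
by exists c => k /S''S' /Hc.
Qed.

Lemma balanced_sum_le (R : numDomainType) (I : eqType) (s : seq I)
    (eps v : I -> R) (c d : R) :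
  (forall k, k \in s -> `|eps k| = 1) -> \sum_(k <- s) eps k = 0 ->
  (forall k, k \in s -> `|v k - c| <= d) ->
  `|\sum_(k <- s) eps k * v k| <= (size s)%:R * d.
Proof.
move=> eps1 eps_sum0 vc.
have -> : \sum_(k <- s) eps k * v k = \sum_(k <- s) eps k * (v k - c).
  under [RHS]eq_bigr do rewrite mulrBr.
  by rewrite sumrB -mulr_suml eps_sum0 mul0r subr0.
apply: (le_trans (ler_norm_sum _ _ _)).
have -> : (size s)%:R * d = \sum_(k <- s) d.
  by rewrite big_const_seq count_predT iter_addr_0 mulr_natl.
rewrite !big_seq; apply: ler_sum => k ks.
by rewrite normrM eps1 // mul1r vc.
Qed.

Lemma linear_sumZ {R : pzRingType} {V : lmodType R} {phi : V -> R} :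
  (forall a u w, phi (a *: u + w) = a * phi u + phi w) ->
  forall (I : Type) (s : seq I) (eps : I -> R) (v : I -> V),
  phi (\sum_(k <- s) eps k *: v k) = \sum_(k <- s) eps k * phi (v k).
Proof.
move=> phi_lin I s eps v; have phi0 : phi 0 = 0.
  have := phi_lin 1 0 0; rewrite scaler0 addr0 mul1r -{1}[phi 0]addr0.
  by move/addrI.
elim: s => [|k s IH]; first by rewrite !big_nil.
by rewrite !big_cons phi_lin IH.
Qed.

Theorem lemma3p1 (R : realType) (X Y : completeNormedModType R)
  (pair : X -> Y -> R) (Cd : R) (e : nat -> X) (f : nat -> Y)
  (Hbil : bilinear_pairing pair)
  (Hstd : standing_assumptions pair Cd e f)
  (I : set nat) (HI : infinite_set I) (n L : nat) (HL : ~~ odd L)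
  (eta : R) (Heta : 0 < eta)
  (x : nat -> X) (y : nat -> Y)
  (Hx : exists M : R, forall j, `|x j| <= M)
  (Hy : exists M : R, forall j, `|y j| <= M) :
  exists Lam : set nat,
    [/\ Lam `<=` I, infinite_set Lam,
     (forall (B : {fset nat}) (eps : nat -> R) (j : nat),
        [set k | k \in B] `<=` Lam -> #|` B| = L -> balanced_signs B eps ->
        (1 <= j <= n)%N ->
        `|pair (\sum_(k <- B) eps k *: x k) (y j)| <= eta) &
     (forall (B : {fset nat}) (eps : nat -> R) (j : nat),
        [set k | k \in B] `<=` Lam -> #|` B| = L -> balanced_signs B eps ->
        (1 <= j <= n)%N ->
        `|pair (x j) (\sum_(k <- B) eps k *: y k)| <= eta)].
Proof.
case: Hstd => _ _ [Cd_gt0 pair_bounded] _ _.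
case: Hbil => pair_linl pair_linr.
case: Hx => Mx xM; case: Hy => My yM.
have pairxyM a b : `|pair (x a) (y b)| <= Cd * Mx * My.
  apply: le_trans (pair_bounded _ _) _; rewrite -!mulrA ler_pM2l //.
  exact: ler_pM (normr_ge0 _) (normr_ge0 _) (xM a) (yM b).
pose d := eta / L.+1%:R.
have d_gt0 : 0 < d by rewrite divr_gt0.
have Ld_le : L%:R * d <= eta.
  by rewrite mulrA ler_pdivrMr // mulrC ler_pM2l // ler_nat.
have balanced_le (B : {fset nat}) eps (S : set nat) (v : nat -> R) :
    [set k | k \in B] `<=` S -> #|` B| = L -> balanced_signs B eps ->
    near_constant d S v -> `|\sum_(k <- B) eps k * v k| <= eta.
  move=> BS BL [eps_sign eps_sum0] [c vc]; apply: le_trans Ld_le; rewrite -BL.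
  apply: balanced_sum_le eps_sum0 _ => k kB; last exact/vc/BS.
  by case: (eps_sign k kB) => ->; rewrite ?normrN normr1.
have [Lam1 [Lam1I Lam1inf near_x]] :=
  bounded_family_near_constant_subset n.+1 HI (fun i k => pairxyM k i) d_gt0.
have [Lam [LamLam1 Laminf near_y]] :=
  bounded_family_near_constant_subset n.+1 Lam1inf pairxyM d_gt0.
exists Lam; split => [k /LamLam1 /Lam1I //|//| B eps j BLam BL Beps /andP[_ jn] |
                      B eps j BLam BL Beps /andP[_ jn]].
- rewrite (linear_sumZ (fun a u w => pair_linl a u w (y j))).
  by apply: balanced_le BL Beps (near_x j jn) => k /BLam /LamLam1.
- rewrite (linear_sumZ (pair_linr ^~ (x j))).
  exact: balanced_le BL Beps (near_y j jn).
Qed.
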